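(* Let $n\ge k\ge1$, let $w,u:[n]^{(k)}\to\mathbb{R}$, and let $\tau^i=(x_iy_i)$, $i\in I$, be transpositions of $[n]$ such that the pairs $\{x_i,y_i\}$, $i\in I$, are pairwise disjoint. For $J\subseteq I$ let $\tau^J$ be the product of the $\tau^j$, $j\in J$; for $i\in I$ let $\delta(i)=\langle w,u\rangle-\langle w_{\tau^i},u\rangle$, and let $\delta(I)=\sum_{i\in I}\delta(i)$. Let $p\in[0,1]$ and let $J$ be a random subset of $I$ in which each $i\in I$ is included independently with probability $p$. Then $\mathbb{E}(\langle w,u\rangle-\langle w_{\tau^J},u\rangle)$ can be written as a polynomial in $p$ of the form $$\delta(I)p+\sum_{i=2}^kA_ip^i$$ for some real numbers $A_2,\dots,A_k$ (not depending on $p$).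
   Context: $[n]^{(k)}$ is the family of $k$-subsets of $[n]$; $\langle w,u\rangle=\sum_e w(e)u(e)$; $w_\pi(e)=w(\pi^{-1}(e))$ for a permutation $\pi$ of $[n]$. *)

From HB Require Import structures.
From mathcomp Require Import all_boot all_order all_algebra all_fingroup.
From mathcomp Require Import reals.
Set Implicit Arguments. Unset Strict Implicit. Unset Printing Implicit Defensive.
Import Order.TTheory GRing.Theory Num.Theory.
Local Open Scope ring_scope.

(* Functions on [n]^(k) are represented as functions on {set 'I_n};
   only their values on k-subsets matter. *)

Definition inner (R : realType) (n k : nat) (w u : {set 'I_n} -> R) : R :=
  \sum_(e : {set 'I_n} | #|e| == k) w e * u e.

Definition permw (R : realType) (n : nat) (w : {set 'I_n} -> R)
  (pi : {perm 'I_n}) : {set 'I_n} -> R :=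
  fun e => w ((pi^-1)%g @: e).

Definition tauJ (I : finType) (n : nat) (x y : I -> 'I_n) (J : {set I})
  : {perm 'I_n} :=
  (\prod_(j in J) tperm (x j) (y j))%g.

Definition delta (R : realType) (I : finType) (n k : nat)
  (w u : {set 'I_n} -> R) (x y : I -> 'I_n) (i : I) : R :=
  inner k w u - inner k (permw w (tperm (x i) (y i))) u.

(* E(<w,u> - <w_{tau^J},u>) where J contains each i independently w.p. p *)
Definition expected_diff (R : realType) (I : finType) (n k : nat)
  (w u : {set 'I_n} -> R) (x y : I -> 'I_n) (p : R) : R :=
  \sum_(J : {set I})
     p ^+ #|J| * (1 - p) ^+ (#|I| - #|J|)%N *
     (inner k w u - inner k (permw w (tauJ x y J)) u).

From HB Require Import structures.
From mathcomp Require Import all_boot all_order all_algebra all_fingroup.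
From mathcomp Require Import reals.
Set Implicit Arguments. Unset Strict Implicit. Unset Printing Implicit Defensive.
Import Order.TTheory GRing.Theory Num.Theory.
Local Open Scope ring_scope.

(* Write g(L) = <w,u> - <w_{tau^L},u>.  Expanding the binomial weights gives
   E = sum_K h(K) p^|K|, where h(K) = sum_{L <= K} (-1)^|K \ L| g(L) is the
   Moebius transform of g on the subset lattice of I.  Now h(0) = g(0) = 0 and
   h({i}) = delta(i).  If |K| > k, every k-set e misses both points of some pair
   {x_i, y_i} with i in K (the pairs are disjoint), so the e-summand of g(L) does
   not depend on whether i is in L, and its alternating sum over L <= K is 0. *)

Section Mobius.
Variables (R : pzRingType) (I : finType).
Implicit Types (F : {set I} -> R) (K L : {set I}).

Definition mobius F K : R :=
  \sum_(L : {set I} | L \subset K) (-1) ^+ #|K :\: L| * F L.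

Lemma mobius_set0 F : mobius F set0 = F set0.
Proof.
rewrite /mobius (eq_bigl (fun L => L == set0)) => [|L]; last by rewrite subset0.
by rewrite big_pred1_eq setDv cards0 mul1r.
Qed.

Lemma mobius_set1 F i : mobius F [set i] = F [set i] - F set0.
Proof.
rewrite /mobius (bigD1 [set i]) //= (eq_bigl (fun L => L == set0)) => [|L].
  by rewrite big_pred1_eq setDv setD0 cards0 cards1 mul1r mulN1r.
rewrite subset1; case: eqVneq => [->|_] /=; last by rewrite andbT.
by rewrite -cards_eq0 cards1.
Qed.

Lemma mobius_sum (J : finType) (P : pred J) (G : J -> {set I} -> R) F K :
  (forall L, F L = \sum_(e | P e) G e L) ->
  mobius F K = \sum_(e | P e) mobius (G e) K.
Proof.
move=> FE; rewrite /mobius exchange_big; apply: eq_bigr => L _.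
by rewrite FE mulr_sumr.
Qed.

Lemma mobius_eq0 F K i : i \in K ->
  (forall L, i \notin L -> F (i |: L) = F L) -> mobius F K = 0.
Proof.
move=> iK Finv; rewrite /mobius (bigID (fun L => i \in L)) /=.
rewrite (reindex_onto (fun L => i |: L) (fun L => L :\ i)) /=; last first.
  by move=> L /andP[_ iL]; rewrite setD1K.
rewrite (eq_bigl (fun L => (L \subset K) && (i \notin L))) => [|L]; last first.
  rewrite setU11 andbT subUset sub1set iK /=; congr (_ && _).
  case: (boolP (i \in L)) => [iL|/setU1K->]; last by rewrite eqxx.
  by apply/eqP => /setP/(_ i); rewrite !inE eqxx iL.
rewrite -big_split big1 // => L /andP[_ iL].
rewrite Finv // (cardsD1 i (K :\: L)) !inE iK iL setDDl setUC.
by rewrite add1n exprS mulN1r mulNr /= addrN.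
Qed.

End Mobius.

Section Superset.
Variables (R : comPzRingType) (I : finType).

Lemma prodr_if_mem (K : {set I}) (a b : I -> R) :
  \prod_i (if i \in K then a i else b i) =
  \prod_(i in K) a i * \prod_(i in ~: K) b i.
Proof.
rewrite (bigID (mem K)) /=; congr (_ * _).
  by apply: eq_bigr => i ->.
by apply: eq_big => [i|i /negbTE ->]; rewrite ?inE.
Qed.

Lemma sum_superset_sign (L : {set I}) (p : R) :
  \sum_(K : {set I} | L \subset K) p ^+ #|K| * (-1) ^+ #|K :\: L|
  = p ^+ #|L| * (1 - p) ^+ (#|I| - #|L|).
Proof.
(* Expand \prod_i (a i + b i) = p^|L| (1-p)^|~L| over subsets; b vanishes on L,
   so only the supersets of L contribute. *)
pose a i : R := if i \in L then p else - p.
pose b i : R := if i \in L then 0 else 1.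
have -> : p ^+ #|L| * (1 - p) ^+ (#|I| - #|L|) = \prod_i (a i + b i).
  rewrite -(cardsC L) addKn -!prodr_const -prodr_if_mem.
  by apply: eq_bigr => i _; rewrite /a /b; case: (i \in L); rewrite ?addr0 1?addrC.
rewrite bigA_distr [RHS](bigID (fun K : {set I} => L \subset K)) /=.
rewrite [X in _ = _ + X]big1 ?addr0 => [|K /subsetPn[i iL iK]]; last first.
  by rewrite (bigD1 i) //= (negbTE iK) /b iL mul0r.
apply: eq_bigr => K LK; rewrite prodr_if_mem.
rewrite [X in _ = _ * X]big1 ?mulr1 => [|i]; last first.
  by rewrite inE /b; case: ifP => // iL; rewrite (subsetP LK).
rewrite (big_setID L) /= (setIidPr LK) -(cardsID L K) (setIidPr LK).
rewrite (eq_bigr (fun=> p)) => [|i iL]; last by rewrite /a iL.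
rewrite [X in _ = _ * X](eq_bigr (fun=> - p)) => [|i]; last first.
  by rewrite inE /a => /andP[/negbTE-> _].
rewrite !prodr_const exprD [(- p) ^+ _]exprNn -mulrA.
by rewrite [p ^+ #|K :\: L| * _]mulrC.
Qed.

Lemma sum_powers_by_card (F : {set I} -> R) (p : R) m :
  (forall K : {set I}, (m < #|K|)%N -> F K = 0) ->
  \sum_(K : {set I}) p ^+ #|K| * F K =
  \sum_(0 <= i < m.+1) (\sum_(K : {set I} | #|K| == i) F K) * p ^+ i.
Proof.
move=> F0; under [RHS]eq_bigr do rewrite big_distrl.
rewrite (exchange_big_dep predT) //=; apply: eq_bigr => K _.
rewrite (eq_bigl (fun i => i == #|K|)) => [|i]; last by rewrite eq_sym.
rewrite big_nat1_eq ltnS /=; case: (leqP #|K| m) => [_|/F0->].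
  exact: mulrC.
by rewrite mulr0.
Qed.

Lemma expected_mobius (F : {set I} -> R) (p : R) :
  \sum_(J : {set I}) p ^+ #|J| * (1 - p) ^+ (#|I| - #|J|) * F J =
  \sum_(K : {set I}) p ^+ #|K| * mobius F K.
Proof.
under [RHS]eq_bigr do rewrite big_distrr.
rewrite (exchange_big_dep predT) //=; apply: eq_bigr => L _.
rewrite -sum_superset_sign big_distrl; apply: eq_big => // K _.
by rewrite /= mulrA.
Qed.

End Superset.

Section DisjointTranspositions.
Variables (n : nat) (I : finType) (x y : I -> 'I_n).
Implicit Types (L K : {set I}) (z : 'I_n).

Lemma prod_tperm_out (s : seq I) z :
  (forall j, j \in s -> z \notin [set x j; y j]) ->
  (\prod_(j <- s) tperm (x j) (y j))%g z = z.
Proof.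
move=> zs; rewrite big_seq; apply: (big_ind (fun t : {perm 'I_n} => t z = z)).
- exact: perm1.
- by move=> t1 t2 t1z t2z; rewrite permM t1z t2z.
- move=> j /zs; rewrite !inE negb_or => /andP[zx zy].
  by rewrite tpermD // eq_sym.
Qed.

Lemma tauJ_out L z : (forall j, j \in L -> z \notin [set x j; y j]) ->
  tauJ x y L z = z.
Proof.
move=> zL; rewrite /tauJ -big_filter; apply: prod_tperm_out => j.
by rewrite mem_filter => /andP[/zL].
Qed.

Hypothesis disjoint_pairs :
  forall i j, i != j -> [disjoint [set x i; y i] & [set x j; y j]].

Lemma pair_meet_eq i j z :
  z \in [set x i; y i] -> z \in [set x j; y j] -> i = j.
Proof.
move=> zi zj; case: (eqVneq i j) => // /disjoint_pairs/disjointFr/(_ zi).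
by rewrite zj.
Qed.

Lemma mem_pair_tperm j z : z \in [set x j; y j] ->
  tperm (x j) (y j) z \in [set x j; y j].
Proof. by case/set2P=> ->; rewrite ?tpermL ?tpermR !inE eqxx ?orbT. Qed.

Lemma tauJ_in L j z : j \in L -> z \in [set x j; y j] ->
  tauJ x y L z = tperm (x j) (y j) z.
Proof.
move=> jL zj; rewrite /tauJ -big_filter.
have : uniq [seq i <- index_enum I | i \in L].
  by rewrite filter_uniq ?index_enum_uniq.
have : j \in [seq i <- index_enum I | i \in L].
  by rewrite mem_filter jL mem_index_enum.
case/splitPr=> s1 s2; rewrite cat_uniq /= negb_or => /and4P[_ /andP[js1 _] js2 _].
have out s t : j \notin s -> t \in [set x j; y j] ->
    (\prod_(i <- s) tperm (x i) (y i))%g t = t.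
  move=> js tj; apply: prod_tperm_out => i si; apply: contra js => ti.
  by rewrite (pair_meet_eq tj ti).
by rewrite big_cat big_cons /= !permM out // out // mem_pair_tperm.
Qed.

Lemma tauJK L : involutive (tauJ x y L).
Proof.
move=> z; case: (pickP [pred j in L | z \in [set x j; y j]]).
  by move=> j /andP[jL zj]; rewrite !(tauJ_in jL) ?mem_pair_tperm // tpermK.
move=> zL.
have {}zL j : j \in L -> z \notin [set x j; y j].
  by move=> jL; apply/negP => zj; have := zL j; rewrite /= jL zj.
by rewrite !tauJ_out.
Qed.

Lemma tauJ_inv L : ((tauJ x y L)^-1)%g = tauJ x y L.
Proof. by apply/permP => z; apply: (canRL (tauJK L)); rewrite permKV. Qed.

Lemma tauJ_setU1 L i z :
  z \notin [set x i; y i] -> tauJ x y (i |: L) z = tauJ x y L z.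
Proof.
move=> zi; case: (pickP [pred j in L | z \in [set x j; y j]]).
  by move=> j /andP[jL zj]; rewrite !(tauJ_in _ zj) ?setU1r.
move=> zL.
have {}zL j : j \in L -> z \notin [set x j; y j].
  by move=> jL; apply/negP => zj; have := zL j; rewrite /= jL zj.
by rewrite !tauJ_out // => j /setU1P[->|/zL].
Qed.

Lemma exists_pair_disjoint (e : {set 'I_n}) K : (#|e| < #|K|)%N ->
  exists2 i, i \in K & [disjoint [set x i; y i] & e].
Proof.
move=> eK; apply/exists_inP; apply: contraTT eK => /exists_inPn meet.
pose f i := if x i \in e then x i else y i.
have fe i : i \in K -> f i \in e.
  move/meet; rewrite disjoints_subset subUset !sub1set !inE negb_and !negbK.
  by rewrite /f; case: ifP.
have fpair i : f i \in [set x i; y i] by rewrite /f !inE; case: ifP; rewrite eqxx ?orbT.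
have finj : {in K &, injective f}.
  by move=> i j _ _ fij; apply: (pair_meet_eq (fpair i)); rewrite fij.
rewrite -leqNgt -(card_in_imset finj); apply: subset_leq_card.
by apply/subsetP => _ /imsetP[i iK ->]; exact: fe.
Qed.

End DisjointTranspositions.

Section Expansion.
Variables (R : realType) (n k : nat) (I : finType).
Variables (w u : {set 'I_n} -> R) (x y : I -> 'I_n).
Hypothesis disjoint_pairs :
  forall i j, i != j -> [disjoint [set x i; y i] & [set x j; y j]].

Definition diff_tau (L : {set I}) : R :=
  inner k w u - inner k (permw w (tauJ x y L)) u.

Lemma diff_tauE L : diff_tau L =
  \sum_(e : {set 'I_n} | #|e| == k) (w e - w (tauJ x y L @: e)) * u e.
Proof.
rewrite /diff_tau /inner -sumrB; apply: eq_bigr => e _.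
by rewrite /permw tauJ_inv // mulrBl.
Qed.

Lemma diff_tau_set0 : diff_tau set0 = 0.
Proof.
rewrite /diff_tau /tauJ big_set0; apply/eqP; rewrite subr_eq0.
apply/eqP/eq_bigr => e _.
by rewrite /permw invg1 (eq_imset _ (@perm1 _)) imset_id.
Qed.

Lemma mobius_diff_tau_set1 i : mobius diff_tau [set i] = delta k w u x y i.
Proof. by rewrite mobius_set1 diff_tau_set0 subr0 /diff_tau /tauJ big_set1. Qed.

Lemma mobius_diff_tau_eq0 (K : {set I}) :
  (k < #|K|)%N -> mobius diff_tau K = 0.
Proof.
move=> kK; rewrite (mobius_sum _ diff_tauE) big1 // => e /eqP ek.
have [i iK ie] : exists2 i, i \in K & [disjoint [set x i; y i] & e].
  by apply: (exists_pair_disjoint disjoint_pairs); rewrite ek.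
apply: (mobius_eq0 iK) => L _; congr (_ * _); congr (_ - w _).
by apply: eq_in_imset => z ze; rewrite tauJ_setU1 // (disjointFl ie ze).
Qed.

End Expansion.

Theorem lemma4p4 (R : realType) (n k : nat) (I : finType)
  (w u : {set 'I_n} -> R) (x y : I -> 'I_n) :
  (1 <= k)%N -> (k <= n)%N ->
  (forall i, x i != y i) ->
  (forall i j, i != j -> [disjoint [set x i; y i] & [set x j; y j]]) ->
  exists A : nat -> R, forall p : R, 0 <= p -> p <= 1 ->
    expected_diff k w u x y p =
      (\sum_(i in I) delta k w u x y i) * p + \sum_(2 <= i < k.+1) A i * p ^+ i.
Proof.
move=> k_gt0 _ _ disjoint_pairs.
pose F := diff_tau k w u x y.
exists (fun i => \sum_(K : {set I} | #|K| == i) mobius F K) => p _ _.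
have -> : expected_diff k w u x y p = \sum_(K : {set I}) p ^+ #|K| * mobius F K.
  exact: expected_mobius.
rewrite (sum_powers_by_card _ (mobius_diff_tau_eq0 w u disjoint_pairs)).
rewrite big_ltn // big_ltn // (eq_bigl (fun K => K == set0)) => [|K]; last first.
  by rewrite cards_eq0.
rewrite big_pred1_eq mobius_set0 diff_tau_set0 mul0r add0r expr1 big_cards1.
by under eq_bigr do rewrite mobius_diff_tau_set1.
Qed.
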